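(* Let $\alpha$ be a problem of QHC. Then (i) for every proposition $p$, $\nabla\alpha\Rightarrow\big((\alpha\to !p)\to !p\big)$; and (ii) if a problem $\beta$ satisfies $\beta\Rightarrow\big((\alpha\to !p)\to !p\big)$ for every proposition $p$, then $\beta\Rightarrow\nabla\alpha$.
   Context: QHC is a two-sorted first-order calculus. Its only terms are individual variables. Every formula is either a problem (denoted by Greek letters $\alpha,\beta,\gamma,\dots$) or a proposition (denoted by Latin letters $p,q,\dots$). Atomic formulas are proposition variables $p(t_1,\dots,t_n)$ (of proposition type), problem variables $\pi(t_1,\dots,t_n)$ (of problem type), and the constants $0$ (a proposition, classical falsity) and $\bot$ (a problem, intuitionistic absurdity). Propositions are closed under the classical connectives $\land,\lor,\to$ and quantifiers $\exists,\forall$; problems are closed under the intuitionistic connectives $\land,\lor,\to$ and quantifiers $\exists,\forall$ (the same symbols are used, distinguished by the type of the arguments). $\neg p$ abbreviates $p\to 0$, $\neg\alpha$ abbreviates $\alpha\to\bot$, and $\leftrightarrow$ is defined as usual. There are two type-conversion operators: if $p$ is a proposition then $!p$ is a problem, and if $\alpha$ is a problem then $?\alpha$ is a proposition. Deductive system of QHC: all axioms and rules of classical predicate logic applied to all propositions; all postulates and rules of intuitionistic predicate logic applied to all problems; the rules $p\,/\,!p$ and $\alpha\,/\,?\alpha$; and the schemas $?!p\to p$; $\alpha\to\, !?\alpha$; $!(p\to q)\to(!p\to !q)$; $?(\alpha\to\beta)\to(?\alpha\to ?\beta)$; $!0\to\bot$; $?(\alpha\land\beta)\leftrightarrow ?\alpha\land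 ?\beta$; $?(\alpha\lor\beta)\leftrightarrow ?\alpha\lor ?\beta$; $?\bot\to 0$; $?\exists x\,\alpha(x)\leftrightarrow\exists x\,?\alpha(x)$; $?\forall x\,\alpha(x)\to\forall x\,?\alpha(x)$ (usual variable side conditions implicit). $\vdash A$ means $A$ is derivable in QHC; $A\Rightarrow B$ means $\vdash A\to B$ and $A\Leftrightarrow B$ means $\vdash A\leftrightarrow B$ (with $A,B$ of the same type); $A\vdash B$ means $B$ is derivable in QHC from the premise $A$. Notation: $\Box p := ?!p$ (a proposition) and $\nabla\alpha := !?\alpha$ (a problem). QC and QH denote classical and intuitionistic predicate calculus. *)

(* Syntax and Hilbert-style deductive system of QHC.
   Individual variables are de Bruijn indices (nat); the only terms are
   variables, so substitution of a term for a variable is a renaming. *)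
From Stdlib Require Import List.
Import ListNotations.

Inductive prop : Type :=
| PVar   : nat -> list nat -> prop      (* proposition variable p_i(t1..tn) *)
| PFalse : prop
| PAnd   : prop -> prop -> prop
| POr    : prop -> prop -> prop
| PImp   : prop -> prop -> prop
| PEx    : prop -> prop                  (* binds de Bruijn index 0 *)
| PAll   : prop -> prop
| PQ     : prob -> prop                  (* ?alpha *)
with prob : Type :=
| QVar   : nat -> list nat -> prob
| QBot   : prob
| QAnd   : prob -> prob -> prob
| QOr    : prob -> prob -> prob
| QImp   : prob -> prob -> prob
| QEx    : prob -> prob
| QAll   : prob -> prob
| QBang  : prop -> prob.                 (* !p *)

Definition up (s : nat -> nat) : nat -> nat :=
  fun n => match n with 0 => 0 | S k => S (s k) end.

Fixpoint ren_prop (s : nat -> nat) (A : prop) : prop :=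
  match A with
  | PVar i ts => PVar i (map s ts)
  | PFalse => PFalse
  | PAnd a b => PAnd (ren_prop s a) (ren_prop s b)
  | POr a b => POr (ren_prop s a) (ren_prop s b)
  | PImp a b => PImp (ren_prop s a) (ren_prop s b)
  | PEx a => PEx (ren_prop (up s) a)
  | PAll a => PAll (ren_prop (up s) a)
  | PQ a => PQ (ren_prob s a)
  end
with ren_prob (s : nat -> nat) (A : prob) : prob :=
  match A with
  | QVar i ts => QVar i (map s ts)
  | QBot => QBot
  | QAnd a b => QAnd (ren_prob s a) (ren_prob s b)
  | QOr a b => QOr (ren_prob s a) (ren_prob s b)
  | QImp a b => QImp (ren_prob s a) (ren_prob s b)
  | QEx a => QEx (ren_prob (up s) a)
  | QAll a => QAll (ren_prob (up s) a)
  | QBang a => QBang (ren_prop s a)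
  end.

Definition inst (t : nat) : nat -> nat :=
  fun n => match n with 0 => t | S k => k end.
Definition lift_prop := ren_prop S.
Definition lift_prob := ren_prob S.

Definition PIff (a b : prop) := PAnd (PImp a b) (PImp b a).
Definition QIff (a b : prob) := QAnd (QImp a b) (QImp b a).
Definition PNeg (a : prop) := PImp a PFalse.
Definition QNeg (a : prob) := QImp a QBot.

Definition Box (p : prop) : prop := PQ (QBang p).
Definition Nabla (a : prob) : prob := QBang (PQ a).

Inductive PrvP : prop -> Prop :=
| P_K  : forall a b, PrvP (PImp a (PImp b a))
| P_S  : forall a b c, PrvP (PImp (PImp a (PImp b c)) (PImp (PImp a b) (PImp a c)))
| P_AndI : forall a b, PrvP (PImp a (PImp b (PAnd a b)))
| P_AndE1 : forall a b, PrvP (PImp (PAnd a b) a)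
| P_AndE2 : forall a b, PrvP (PImp (PAnd a b) b)
| P_OrI1 : forall a b, PrvP (PImp a (POr a b))
| P_OrI2 : forall a b, PrvP (PImp b (POr a b))
| P_OrE : forall a b c, PrvP (PImp (PImp a c) (PImp (PImp b c) (PImp (POr a b) c)))
| P_EFQ : forall a, PrvP (PImp PFalse a)
| P_DNE : forall a, PrvP (PImp (PNeg (PNeg a)) a)
| P_AllE : forall a t, PrvP (PImp (PAll a) (ren_prop (inst t) a))
| P_ExI : forall a t, PrvP (PImp (ren_prop (inst t) a) (PEx a))
| P_MP : forall a b, PrvP (PImp a b) -> PrvP a -> PrvP b
| P_Gen : forall a b, PrvP (PImp (lift_prop a) b) -> PrvP (PImp a (PAll b))
| P_ExR : forall a b, PrvP (PImp b (lift_prop a)) -> PrvP (PImp (PEx b) a)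
| P_Q : forall a, PrvQ a -> PrvP (PQ a)
| P_QB : forall p, PrvP (PImp (Box p) p)
| P_QK : forall a b, PrvP (PImp (PQ (QImp a b)) (PImp (PQ a) (PQ b)))
| P_QAnd : forall a b, PrvP (PIff (PQ (QAnd a b)) (PAnd (PQ a) (PQ b)))
| P_QOr : forall a b, PrvP (PIff (PQ (QOr a b)) (POr (PQ a) (PQ b)))
| P_QBot : PrvP (PImp (PQ QBot) PFalse)
| P_QEx : forall a, PrvP (PIff (PQ (QEx a)) (PEx (PQ a)))
| P_QAll : forall a, PrvP (PImp (PQ (QAll a)) (PAll (PQ a)))
with PrvQ : prob -> Prop :=
| Q_K  : forall a b, PrvQ (QImp a (QImp b a))
| Q_S  : forall a b c, PrvQ (QImp (QImp a (QImp b c)) (QImp (QImp a b) (QImp a c)))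
| Q_AndI : forall a b, PrvQ (QImp a (QImp b (QAnd a b)))
| Q_AndE1 : forall a b, PrvQ (QImp (QAnd a b) a)
| Q_AndE2 : forall a b, PrvQ (QImp (QAnd a b) b)
| Q_OrI1 : forall a b, PrvQ (QImp a (QOr a b))
| Q_OrI2 : forall a b, PrvQ (QImp b (QOr a b))
| Q_OrE : forall a b c, PrvQ (QImp (QImp a c) (QImp (QImp b c) (QImp (QOr a b) c)))
| Q_EFQ : forall a, PrvQ (QImp QBot a)
| Q_AllE : forall a t, PrvQ (QImp (QAll a) (ren_prob (inst t) a))
| Q_ExI : forall a t, PrvQ (QImp (ren_prob (inst t) a) (QEx a))
| Q_MP : forall a b, PrvQ (QImp a b) -> PrvQ a -> PrvQ b
| Q_Gen : forall a b, PrvQ (QImp (lift_prob a) b) -> PrvQ (QImp a (QAll b))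
| Q_ExR : forall a b, PrvQ (QImp b (lift_prob a)) -> PrvQ (QImp (QEx b) a)
| Q_B : forall p, PrvP p -> PrvQ (QBang p)
| Q_QN : forall a, PrvQ (QImp a (Nabla a))
| Q_BK : forall p q, PrvQ (QImp (QBang (PImp p q)) (QImp (QBang p) (QBang q)))
| Q_BFalse : PrvQ (QImp (QBang PFalse) QBot).

Definition QEntails (a b : prob) : Prop := PrvQ (QImp a b).

(* Proof idea.  (i) Classically, ?(alpha -> !p) together with ?alpha yields
   ?!p, hence p.  Lifting this classical derivation along the !-modality
   (rule p / !p and the K-schema for !) turns !?(alpha -> !p) and !?alpha
   into !p; since alpha -> !p implies !?(alpha -> !p), we get
   (alpha -> !p) -> (Nabla alpha -> !p), and exchanging the premises gives (i).
   (ii) Instantiating the hypothesis at p := ?alpha, the premise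
   alpha -> !?alpha is an axiom, so beta => Nabla alpha. *)

Lemma q_trans a b c : PrvQ (QImp a b) -> PrvQ (QImp b c) -> PrvQ (QImp a c).
Proof.
  intros Hab Hbc.
  exact (Q_MP _ _ (Q_MP _ _ (Q_S a b c) (Q_MP _ _ (Q_K _ a) Hbc)) Hab).
Qed.

Lemma q_exchange a b c : PrvQ (QImp a (QImp b c)) -> PrvQ (QImp b (QImp a c)).
Proof.
  intros H.
  apply (q_trans _ (QImp a b)).
  - apply Q_K.
  - exact (Q_MP _ _ (Q_S a b c) H).
Qed.

Lemma p_trans a b c : PrvP (PImp a b) -> PrvP (PImp b c) -> PrvP (PImp a c).
Proof.
  intros Hab Hbc.
  exact (P_MP _ _ (P_MP _ _ (P_S a b c) (P_MP _ _ (P_K _ a) Hbc)) Hab).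
Qed.

Lemma p_postcompose a b c : PrvP (PImp b c) -> PrvP (PImp (PImp a b) (PImp a c)).
Proof.
  intros Hbc.
  exact (P_MP _ _ (P_S a b c) (P_MP _ _ (P_K _ a) Hbc)).
Qed.

Lemma bang_lift2 p q r :
  PrvP (PImp p (PImp q r)) -> PrvQ (QImp (QBang p) (QImp (QBang q) (QBang r))).
Proof.
  intros H.
  exact (q_trans _ _ _ (Q_MP _ _ (Q_BK p (PImp q r)) (Q_B _ H)) (Q_BK q r)).
Qed.

Lemma question_modus_ponens a p :
  PrvP (PImp (PQ (QImp a (QBang p))) (PImp (PQ a) p)).
Proof.
  apply (p_trans _ _ _ (P_QK a (QBang p))).
  apply p_postcompose, P_QB.
Qed.

(* Part (i), with premises exchanged: (alpha -> !p) -> (Nabla alpha -> !p). *)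
Lemma continuation_through_nabla a p :
  PrvQ (QImp (QImp a (QBang p)) (QImp (Nabla a) (QBang p))).
Proof.
  apply (q_trans _ _ _ (Q_QN (QImp a (QBang p)))).
  exact (bang_lift2 _ _ _ (question_modus_ponens a p)).
Qed.

(* Part (ii) needs only the instance p := ?alpha of the hypothesis. *)
Lemma nabla_weakest a beta :
  QEntails beta (QImp (QImp a (Nabla a)) (Nabla a)) -> QEntails beta (Nabla a).
Proof.
  intros H.
  exact (Q_MP _ _ (q_exchange _ _ _ H) (Q_QN a)).
Qed.

Theorem corollary2p14 (alpha : prob) :
  (forall p : prop,
     QEntails (Nabla alpha) (QImp (QImp alpha (QBang p)) (QBang p))) /\
  (forall beta : prob,
     (forall p : prop, QEntails beta (QImp (QImp alpha (QBang p)) (QBang p))) ->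
     QEntails beta (Nabla alpha)).
Proof.
  split.
  - intros p. exact (q_exchange _ _ _ (continuation_through_nabla alpha p)).
  - intros beta H. exact (nabla_weakest alpha beta (H (PQ alpha))).
Qed.
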